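(* Let $e\in\mathsf{KAT}(\Sigma,T)$. Then $e$ is a deterministic KAT expression if and only if $L(e)$ is a deterministic guarded language.
   Context: For finite $T$ (tests) and $\Sigma$ (actions): $\mathsf{BA}(T)$ is generated by $b::=\mathsf{false}\mid\mathsf{true}\mid t\in T\mid b\vee c\mid b\wedge c\mid\overline b$; $\mathsf{KAT}(\Sigma,T)$ by $e::=b\mid p\in\Sigma\mid e+f\mid e\cdot f\mid e^*$. Relational semantics: for a set $S$, $\tau:T\to2^S$ and $\sigma:\Sigma\to2^{S\times S}$, tests are interpreted as subsets $[\![b]\!]_\tau\subseteq S$ in the Boolean way, and $\mathcal{R}[\![b]\!]=\{\langle s,s\rangle:s\in[\![b]\!]_\tau\}$, $\mathcal{R}[\![p]\!]=\sigma(p)$, $\mathcal{R}[\![e+f]\!]=\mathcal{R}[\![e]\!]\cup\mathcal{R}[\![f]\!]$, $\mathcal{R}[\![ef]\!]=\mathcal{R}[\![e]\!]\circ\mathcal{R}[\![f]\!]$ (first $e$ then $f$), $\mathcal{R}[\![e^*]\!]$ = reflexive-transitive closure of $\mathcal{R}[\![e]\!]$. $e$ is a deterministic KAT expression if for all $S,\tau,\sigma$ such that every $\sigma(p)$ is the graph of a partial function, $\mathcal{R}[\![e]\!]^\sigma_\tau$ is the graph of a partial function. Language semantics: atoms $\mathsf{At}_T=2^T$, $\alpha\le b$ meaning $b$ holds under the assignment making exactly the tests in $\alpha$ true; guarded strings are words in $\mathsf{At}_T(\Sigma\mathsf{At}_T)^*$; $w'\alpha\diamond\alpha x'=w'\alpha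 x'$; $L\diamond K=\{w\diamond x:w\in L,x\in K,\text{defined}\}$; $L^{(0)}=\mathsf{At}_T$, $L^{(n+1)}=L\diamond L^{(n)}$, $L^{( * )}=\bigcup_nL^{(n)}$; $L(b)=\{\alpha:\alpha\le b\}$, $L(p)=\{\alpha p\beta\}$, $L(e+f)=L(e)\cup L(f)$, $L(ef)=L(e)\diamond L(f)$, $L(e^* )=L(e)^{( * )}$. A set $L$ of guarded strings is deterministic if for all distinct $w,w'\in L$: (i) $w$ is not a proper prefix of $w'$, (ii) the first position where $w,w'$ differ is an atom. *)

From mathcomp Require Import all_boot.
Set Implicit Arguments.
Unset Strict Implicit.
Unset Printing Implicit Defensive.

Inductive bexp (T : Type) : Type :=
| BFalse | BTrue | BTest of T
| BOr of bexp T & bexp T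
| BAnd of bexp T & bexp T
| BNot of bexp T.

Inductive kexp (Sigma T : Type) : Type :=
| KTest of bexp T
| KAct of Sigma
| KPlus of kexp Sigma T & kexp Sigma T
| KSeq of kexp Sigma T & kexp Sigma T
| KStar of kexp Sigma T.

Arguments BFalse {T}. Arguments BTrue {T}.

Fixpoint tsem (T S : Type) (tau : T -> S -> Prop) (b : bexp T) : S -> Prop :=
  match b with
  | BFalse => fun _ => False
  | BTrue => fun _ => True
  | BTest t => tau t
  | BOr b c => fun s => tsem tau b s \/ tsem tau c s
  | BAnd b c => fun s => tsem tau b s /\ tsem tau c s
  | BNot b => fun s => ~ tsem tau b s
  end.

Definition rcomp (S : Type) (R Q : S -> S -> Prop) : S -> S -> Prop :=
  fun x z => exists y, R x y /\ Q y z.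

Inductive rtc (S : Type) (R : S -> S -> Prop) : S -> S -> Prop :=
| rtc_refl x : rtc R x x
| rtc_step x y z : R x y -> rtc R y z -> rtc R x z.

Fixpoint rsem (Sigma T S : Type) (tau : T -> S -> Prop)
    (sigma : Sigma -> S -> S -> Prop) (e : kexp Sigma T) : S -> S -> Prop :=
  match e with
  | KTest b => fun x y => x = y /\ tsem tau b x
  | KAct p => sigma p
  | KPlus e f => fun x y => rsem tau sigma e x y \/ rsem tau sigma f x y
  | KSeq e f => rcomp (rsem tau sigma e) (rsem tau sigma f)
  | KStar e => rtc (rsem tau sigma e)
  end.

Definition partial_fun (S : Type) (R : S -> S -> Prop) : Prop :=
  forall x y z, R x y -> R x z -> y = z.

Definition deterministic_kat (Sigma T : Type) (e : kexp Sigma T) : Prop :=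
  forall (S : Type) (tau : T -> S -> Prop) (sigma : Sigma -> S -> S -> Prop),
    (forall p, partial_fun (sigma p)) -> partial_fun (rsem tau sigma e).

Definition atom (T : finType) := {set T}.

(* alpha <= b : b holds when exactly the tests in alpha are true *)
Fixpoint atom_le (T : finType) (a : atom T) (b : bexp T) : bool :=
  match b with
  | BFalse => false
  | BTrue => true
  | BTest t => t \in a
  | BOr b c => atom_le a b || atom_le a c
  | BAnd b c => atom_le a b && atom_le a c
  | BNot b => ~~ atom_le a b
  end.

(* guarded string alpha0 p1 alpha1 ... pn alphan, as (alpha0, [(p1,alpha1);...]) *)
Definition gstring (Sigma T : finType) := (atom T * seq (Sigma * atom T))%type.

Definition glang (Sigma T : finType) := gstring Sigma T -> Prop.

Definition last_atom (Sigma T : finType) (w : gstring Sigma T) : atom T :=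
  last w.1 (map snd w.2).

Definition fuse (Sigma T : finType) (L K : glang Sigma T) : glang Sigma T :=
  fun g => exists w x, L w /\ K x /\ last_atom w = x.1 /\ g = (w.1, w.2 ++ x.2).

Fixpoint fpow (Sigma T : finType) (L : glang Sigma T) (n : nat) : glang Sigma T :=
  match n with
  | 0 => fun g => g.2 = [::]
  | n.+1 => fuse L (fpow L n)
  end.

Definition fstar (Sigma T : finType) (L : glang Sigma T) : glang Sigma T :=
  fun g => exists n, fpow L n g.

Fixpoint lang (Sigma T : finType) (e : kexp Sigma T) : glang Sigma T :=
  match e with
  | KTest b => fun g => g.2 = [::] /\ atom_le g.1 b
  | KAct p => fun g => exists b, g.2 = [:: (p, b)]
  | KPlus e f => fun g => lang e g \/ lang f g
  | KSeq e f => fuse (lang e) (lang f)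
  | KStar e => fstar (lang e)
  end.

Definition gflat (Sigma T : finType) (w : gstring Sigma T) : seq (atom T + Sigma) :=
  inl w.1 :: flatten (map (fun pa => [:: inr pa.1; inl pa.2]) w.2).

Definition is_atom_sym (A B : Type) (x : A + B) : bool :=
  if x is inl _ then true else false.

Definition deterministic_lang (Sigma T : finType) (L : glang Sigma T) : Prop :=
  forall w w', L w -> L w' -> w <> w' ->
    (~ exists u, u <> [::] /\ gflat w' = gflat w ++ u) /\
    (* (ii) the first position where w, w' differ is an atom *)
    (forall (i : nat) (d : atom T + Sigma),
        i < size (gflat w) -> i < size (gflat w') ->
        take i (gflat w) = take i (gflat w') ->
        nth d (gflat w) i <> nth d (gflat w') i ->
        is_atom_sym (nth d (gflat w) i)).

From mathcomp Require Import all_boot boolp.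

Set Implicit Arguments.
Unset Strict Implicit.
Unset Printing Implicit Defensive.

(** (<-) A transition of [e] from [s] to [s'] is traced by a run along a
   guarded string of [L(e)] whose atoms are the sets of tests true at the
   visited states.  Since actions are partial functions, two such runs from the
   same state stay in the same state until their strings first differ; in a
   deterministic language this happens never, or at an atom, which is then
   determined by the common state, so both runs end in the same state.

   (->) Given [w, w'] in [L(e)], interpret [e] on words: a test reads the last
   atom of the current word, and an action [p] appends [p] and an atom provided
   the result stays a prefix of [w] or [w'].  Both strings are then realized
   as runs from their first atom.  If [w] were a proper prefix of [w'], or the
   two first differed at an action, the interpretation of every action would be
   a partial function, so determinism of [e] would force [w = w']. *)

Section FirstDifference.
Variable X : eqType.
Implicit Types (A B x : seq X) (a : X).

Lemma nth_eq_of_take_eq A B d i j :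
  take j A = take j B -> i < j -> nth d A i = nth d B i.
Proof. by move=> eqAB lt_ij; rewrite -(nth_take d lt_ij) eqAB nth_take. Qed.

Lemma first_diff_unique A B d i j :
  take i A = take i B -> nth d A i <> nth d B i ->
  take j A = take j B -> nth d A j <> nth d B j -> i = j.
Proof.
move=> tAB_i nAB_i tAB_j nAB_j.
case: (ltngtP i j) => // [lt_ij | lt_ji].
  by case: nAB_i; apply: nth_eq_of_take_eq tAB_j lt_ij.
by case: nAB_j; apply: nth_eq_of_take_eq tAB_i lt_ji.
Qed.

Lemma prefix_rcons_inj x a1 a2 A :
  prefix (x ++ [:: a1]) A -> prefix (x ++ [:: a2]) A -> a1 = a2.
Proof.
move=> /prefixP[z ->]; rewrite -catA prefix_catr //=.
by case/and3P => _ /eqP.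
Qed.

Lemma prefix_rcons_first_diff x a1 a2 A B d i :
  prefix (x ++ [:: a1]) A -> prefix (x ++ [:: a2]) B -> a1 <> a2 ->
  take i A = take i B -> nth d A i <> nth d B i -> nth d A i = a1.
Proof.
move=> /prefixP[zA ->] /prefixP[zB ->] n12 tAB nAB; rewrite -!catA /= in tAB nAB *.
have tx a z : take (size x) (x ++ a :: z) = x by rewrite take_size_cat.
have nx a z : nth d (x ++ a :: z) (size x) = a by rewrite nth_cat ltnn subnn.
have -> : i = size x by apply: (first_diff_unique tAB nAB); rewrite ?tx ?nx.
by rewrite nx.
Qed.

End FirstDifference.

Definition deterministic_pair (X Y : Type) (A B : seq (X + Y)) : Prop :=
  (~ exists u, u <> [::] /\ B = A ++ u) /\
  (forall (i : nat) (d : X + Y), i < size A -> i < size B ->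
     take i A = take i B -> nth d A i <> nth d B i -> is_atom_sym (nth d A i)).

Lemma deterministic_pair_cons (X Y : Type) (c : X + Y) A B :
  deterministic_pair (c :: A) (c :: B) -> deterministic_pair A B.
Proof.
move=> [npre first]; split.
  by case=> u [u0 eB]; apply: npre; exists u; rewrite eB.
by move=> i d iA iB tAB; apply: (first i.+1 d) => //=; rewrite tAB.
Qed.

Definition gtail (Sigma T : finType) (l : seq (Sigma * atom T)) : seq (atom T + Sigma) :=
  flatten (map (fun pa => [:: inr pa.1; inl pa.2]) l).

Lemma gtail_cat (Sigma T : finType) (l1 l2 : seq (Sigma * atom T)) :
  gtail (l1 ++ l2) = gtail l1 ++ gtail l2.
Proof. by rewrite /gtail map_cat flatten_cat. Qed.

Section Runs.
Variables (Sigma T : finType) (S : Type).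
Variables (tau : T -> S -> Prop) (sigma : Sigma -> S -> S -> Prop).

Definition matches (a : atom T) (s : S) : Prop := forall t, t \in a <-> tau t s.

Definition atom_of (s : S) : atom T := [set t | `[< tau t s >]].

Lemma matches_atom_of s : matches (atom_of s) s.
Proof. by move=> t; rewrite inE asboolE. Qed.

Lemma matches_inj a b s : matches a s -> matches b s -> a = b.
Proof. by move=> ma mb; apply/setP => t; apply/idP/idP => [/ma/mb | /mb/ma]. Qed.

Lemma tsem_matches a s (b : bexp T) : matches a s -> tsem tau b s <-> atom_le a b.
Proof.
move=> ma; elim: b => [| |t|b IHb c IHc|b IHb c IHc|b IHb] /=.
- by split.
- by split.
- exact: iff_sym (ma t).
- by rewrite IHb IHc; apply: rwP orP.
- by rewrite IHb IHc; apply: rwP andP.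
- by rewrite IHb; apply: rwP negP.
Qed.

Fixpoint run (a : atom T) (l : seq (Sigma * atom T)) (s s' : S) : Prop :=
  matches a s /\
  if l is (p, b) :: l' then exists s1, sigma p s s1 /\ run b l' s1 s' else s = s'.

Lemma run_head a l s s' : run a l s s' -> matches a s.
Proof. by case: l => [|[p b] l] []. Qed.

Lemma run_last a l s s' : run a l s s' -> matches (last a (map snd l)) s'.
Proof.
elim: l a s => [|[p b] l IH] a s /= [ma]; first by move=> <-.
by case=> s1 [_ /IH].
Qed.

Lemma run_cat a l1 l2 s y s' :
  run a l1 s y -> run (last a (map snd l1)) l2 y s' -> run a (l1 ++ l2) s s'.
Proof.
elim: l1 a s => [|[p b] l1 IH] a s /= [ma]; first by move=> <-.
by case=> s1 [st r1] r2; split => //; exists s1; split => //; apply: IH r2.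
Qed.

Lemma fuse_run (L K : glang Sigma T) w x s y s' :
  L w -> K x -> run w.1 w.2 s y -> run x.1 x.2 y s' ->
  exists g, fuse L K g /\ run g.1 g.2 s s'.
Proof.
move=> Lw Kx rw rx.
have wx : last_atom w = x.1 := matches_inj (run_last rw) (run_head rx).
exists (w.1, w.2 ++ x.2); split; first by exists w, x.
by apply: run_cat rw _; rewrite -wx in rx.
Qed.

Definition traces (L : glang Sigma T) (R : S -> S -> Prop) : Prop :=
  forall s s', R s s' -> exists w, L w /\ run w.1 w.2 s s'.

Lemma traces_fuse L K R Q : traces L R -> traces K Q -> traces (fuse L K) (rcomp R Q).
Proof.
move=> trL trK s s' [y [/trL[w [Lw rw]] /trK[x [Kx rx]]]].
exact: fuse_run Lw Kx rw rx.
Qed.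

Lemma traces_fstar L R : traces L R -> traces (fstar L) (rtc R).
Proof.
move=> trL s s'; elim=> [x | x y z Rxy _ [w [[n Lnw] rw]]].
  exists (atom_of x, [::]); split; first by exists 0.
  by split; first exact: matches_atom_of.
have [v [Lv rv]] := trL _ _ Rxy.
have [g [Fg rg]] := fuse_run Lv Lnw rv rw.
by exists g; split; first exists n.+1.
Qed.

Lemma traces_lang e : traces (lang e) (rsem tau sigma e).
Proof.
elim: e => [b|p|e IHe f IHf|e IHe f IHf|e IHe] s s' /=.
- case=> <- tb; exists (atom_of s, [::]); split; last first.
    by split; first exact: matches_atom_of.
  by split => //; apply/(tsem_matches _ (matches_atom_of s)).
- move=> st; exists (atom_of s, [:: (p, atom_of s')]).
  split; first by exists (atom_of s').
  split; first exact: matches_atom_of.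
  by exists s'; split => //; split; first exact: matches_atom_of.
- by case=> [/(IHe _ _) | /(IHf _ _)] [w [Lw rw]]; exists w; tauto.
- exact: traces_fuse.
- exact: traces_fstar.
Qed.

Hypothesis sigma_fun : forall p, partial_fun (sigma p).

Lemma run_functional a l a' l' s s1 s2 :
  run a l s s1 -> run a' l' s s2 ->
  (gflat (a, l) <> gflat (a', l') ->
     deterministic_pair (gflat (a, l)) (gflat (a', l')) /\
     deterministic_pair (gflat (a', l')) (gflat (a, l))) ->
  s1 = s2.
Proof.
elim: l a a' s l' => [|[p b] l IH] a a' s [|[q c] l'] /= [ma r] [ma' r'] det;
  have eaa' := matches_inj ma ma'; subst a'.
- by rewrite -r -r'.
- have neq : gflat (a, [::]) <> gflat (a, (q, c) :: l') by [].
  have [[npre _] _] := det neq.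
  by case: npre; exists (inr q :: inl c :: gtail l').
- have neq : gflat (a, (p, b) :: l) <> gflat (a, [::]) by [].
  have [_ [npre _]] := det neq.
  by case: npre; exists (inr p :: inl b :: gtail l).
case: r r' => [s3 [st r]] [s3' [st' r']].
case: (p =P q) => [epq | npq]; last first.
  have nth1 : inr p <> inr q :> atom T + Sigma by case.
  have [[_ first] _] := det (fun E => nth1 (congr1 (nth (inl a) ^~ 1) E)).
  by have := first 1 (inl a) isT isT erefl nth1.
subst q; have es := sigma_fun st st'; subst s3'.
have ebc := matches_inj (run_head r) (run_head r'); subst c.
apply: IH r r' _ => neq; have [d1 d2] := det (fun E => neq (congr1 (drop 2) E)).
by split; [move: d1 | move: d2] => /deterministic_pair_cons/deterministic_pair_cons.
Qed.

End Runs.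

Section PrefixModel.
Variables (Sigma T : finType) (A B : seq (atom T + Sigma)).
Local Notation word := (seq (atom T + Sigma)).

Definition last_atom_of (x : word) : atom T :=
  if last (inl set0) x is inl a then a else set0.

Definition allowed (y : word) : bool := prefix y A || prefix y B.

Definition model_test (t : T) (x : word) : Prop := t \in last_atom_of x.

Definition model_step (p : Sigma) (x y : word) : Prop :=
  exists b, y = x ++ [:: inr p; inl b] /\ allowed y.

Lemma allowed_catl x y : allowed (x ++ y) -> allowed x.
Proof.
by case/orP => /(prefix_trans (prefix_prefix x y)) pre; rewrite /allowed pre ?orbT.
Qed.

Lemma last_atom_of_gtail x l :
  last_atom_of (x ++ gtail l) = last (last_atom_of x) (map snd l).
Proof.
elim: l x => [|[p b] l IH] x /=; first by rewrite cats0.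
by rewrite -[x ++ _]/(x ++ [:: inr p; inl b] ++ gtail l) catA IH /last_atom_of last_cat.
Qed.

Definition realizes (R : word -> word -> Prop) (L : glang Sigma T) : Prop :=
  forall g x, L g -> last_atom_of x = g.1 -> allowed (x ++ gtail g.2) ->
    R x (x ++ gtail g.2).

Lemma realizes_fuse L K R Q :
  realizes R L -> realizes Q K -> realizes (rcomp R Q) (fuse L K).
Proof.
move=> reL reK _ x [w [v [Lw [Kv [wv ->]]]]] /= lx.
rewrite gtail_cat catA => al; exists (x ++ gtail w.2); split.
  by apply: reL => //; apply: allowed_catl al.
by apply: reK => //; rewrite last_atom_of_gtail lx.
Qed.

Lemma realizes_fstar L R : realizes R L -> realizes (rtc R) (fstar L).
Proof.
move=> reL g x [n]; elim: n g x => [|n IH] g x /=.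
  by move=> -> _ _; rewrite cats0; apply: rtc_refl.
move=> Fg lx al; have [y [Rxy Ry]] := realizes_fuse reL IH Fg lx al.
exact: rtc_step Rxy Ry.
Qed.

Lemma realizes_lang e : realizes (rsem model_test model_step e) (lang e).
Proof.
elim: e => [b|p|e IHe f IHf|e IHe f IHf|e IHe] /=.
- move=> g x [-> gb] lx _; rewrite cats0; split=> //.
  have mx : matches model_test (last_atom_of x) x by [].
  by apply/(tsem_matches _ mx); rewrite lx.
- by move=> g x [b ->] _ al; exists b.
- by move=> g x [Lg | Lg] lx al; [left; apply: IHe | right; apply: IHf].
- exact: realizes_fuse.
- exact: realizes_fstar.
Qed.

Definition unique_branching : Prop :=
  forall x p b1 b2,
    allowed (x ++ [:: inr p; inl b1]) -> allowed (x ++ [:: inr p; inl b2]) -> b1 = b2.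

Lemma model_step_fun : unique_branching -> forall p, partial_fun (model_step p).
Proof. by move=> ub p x _ _ [b1 [-> al1]] [b2 [-> al2]]; rewrite (ub _ _ _ _ al1 al2). Qed.

End PrefixModel.

Section Branching.
Variables (Sigma T : finType).
Implicit Types A B : seq (atom T + Sigma).

Let split_step (x : seq (atom T + Sigma)) p b :
  x ++ [:: inr p; inl b] = (x ++ [:: inr p]) ++ [:: inl b].
Proof. by rewrite -catA. Qed.

Lemma unique_branching_prefix A B : prefix A B -> unique_branching A B.
Proof.
move=> AB x p b1 b2; rewrite /allowed !split_step.
have toB y : prefix y A || prefix y B -> prefix y B.
  by case/orP => // /prefix_trans; apply.
by move=> /toB al1 /toB al2; case: (prefix_rcons_inj al1 al2).
Qed.

Lemma unique_branching_first_diff A B d i :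
  take i A = take i B -> nth d A i <> nth d B i -> ~~ is_atom_sym (nth d A i) ->
  unique_branching A B.
Proof.
move=> tAB nAB act x p b1 b2; rewrite /allowed !split_step.
case: (b1 =P b2) => // n12; have n12' : inl b1 <> inl b2 :> atom T + Sigma by case.
case/orP => al1 /orP[] al2.
- by case: n12; case: (prefix_rcons_inj al1 al2).
- by rewrite (prefix_rcons_first_diff al1 al2 n12' tAB nAB) in act.
- by rewrite (prefix_rcons_first_diff al2 al1 (nesym n12') tAB nAB) in act.
- by case: n12; case: (prefix_rcons_inj al1 al2).
Qed.

Lemma det_kat_gflat_eq (e : kexp Sigma T) w w' :
  deterministic_kat e -> lang e w -> lang e w' -> w.1 = w'.1 ->
  unique_branching (gflat w) (gflat w') -> gflat w = gflat w'.
Proof.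
move=> det Lw Lw' ew ub.
pose M := rsem (@model_test Sigma T) (model_step (gflat w) (gflat w')) e.
have runs g : lang e g -> allowed (gflat w) (gflat w') (gflat g) -> M [:: inl g.1] (gflat g).
  by move=> Lg; apply: (@realizes_lang _ _ _ _ e g [:: inl g.1] Lg).
apply: (det _ _ _ (model_step_fun ub) [:: inl w.1]).
  by apply: runs Lw _; rewrite /allowed prefix_refl.
by rewrite ew; apply: runs Lw' _; rewrite /allowed prefix_refl orbT.
Qed.

Lemma det_kat_pair (e : kexp Sigma T) w w' :
  deterministic_kat e -> lang e w -> lang e w' ->
  deterministic_pair (gflat w) (gflat w').
Proof.
move=> det Lw Lw'; split.
  case=> u [u0 ew']; apply: u0.
  have ub : unique_branching (gflat w) (gflat w').
    by apply: unique_branching_prefix; rewrite ew' prefix_prefix.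
  have ew : w.1 = w'.1 by case: ew' => ->.
  have := det_kat_gflat_eq det Lw Lw' ew ub.
  by rewrite ew' => /(congr1 (drop (size (gflat w)))); rewrite drop_size_cat // drop_size.
move=> i d _ _ tAB nAB; case act: is_atom_sym => //.
case: i tAB nAB act => [|i] tAB nAB act; first by [].
have ew : w.1 = w'.1 by case: tAB.
have ub := unique_branching_first_diff tAB nAB (negbT act).
by case: nAB; rewrite (det_kat_gflat_eq det Lw Lw' ew ub).
Qed.

End Branching.

Theorem proposition4p4 (Sigma T : finType) (e : kexp Sigma T) :
  deterministic_kat e <-> deterministic_lang (lang e).
Proof.
split=> [det w w' Lw Lw' _ | detL S tau sigma sigma_fun s s1 s2 es1 es2].
  exact: (det_kat_pair det Lw Lw').
have [[a l] [Lw rw]] := traces_lang es1.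
have [[a' l'] [Lw' rw']] := traces_lang es2.
apply: (run_functional sigma_fun rw rw') => neq.
by split; apply: detL => // eww; apply: neq; rewrite eww.
Qed.
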